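(* Let $n\ge1$, $\preceq$ an admissible order on $L([0,1])$, $F\colon L([0,1])^2\to L([0,1])$, $G\colon L([0,1])^n\to L([0,1])$. The IV Sugeno-like $FG$-functional $\mathbf S_m^{F,G}$ satisfies: (i) $\mathbf S_m^{F,G}\succeq\wedge$ for every IV fuzzy measure $m$ whenever (a) $F(X,\mathbf1)\succeq X$ for all $X$ and $G=f\circ\mathrm{Proj}_1$ for some $f\colon L([0,1])\to L([0,1])$ with $f\succeq \mathrm{Id}$; or (b) $F(X,\mathbf1)\succeq X$ for all $X$, $F$ is non-decreasing in the second variable and $G=f\circ\vee$ for some $f$ with $f\succeq\mathrm{Id}$; (ii) $\mathbf S_m^{F,G}\preceq\vee$ for every $m$ whenever (a) $F(X,\mathbf1)\preceq X$ for all $X$ and $G=f\circ\mathrm{Proj}_1$ with $f\preceq\mathrm{Id}$; or (b) $F(X,\mathbf1)\preceq X$ for all $X$, $F$ is non-decreasing in the second variable and $G=f\circ\vee$ with $f\preceq\mathrm{Id}$; (iii) $\mathbf S_m^{F,G}$ is internal for every $m$ whenever (a) $F(X,\mathbf1)=X$ for all $X$ and $G=\mathrm{Proj}_1$; or (b) $F(X,\mathbf1)=X$ for all $X$, $F$ is non-decreasing in the second variable and $G=\vee$.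
   Context: $N=\{1,\dots,n\}$. $L([0,1])=\{[a,b]:0\le a\le b\le1\}$, $\mathbf0=[0,0]$, $\mathbf1=[1,1]$. An admissible order $\preceq$ is a total order on $L([0,1])$ with $[a,b]\preceq[c,d]$ whenever $a\le c$, $b\le d$. $\vee,\wedge$ denote maximum and minimum w.r.t. $\preceq$; monotonicity is w.r.t. $\preceq$; $\mathrm{Proj}_1(X_1,\dots,X_n)=X_1$; $f\succeq\mathrm{Id}$ means $f(X)\succeq X$ for all $X$ (similarly $\preceq$). $\mathbf S\succeq\wedge$ means $\mathbf S(X_1,\dots,X_n)\succeq\wedge(X_1,\dots,X_n)$ for all inputs, similarly $\mathbf S\preceq\vee$; internal means both. An IV fuzzy measure w.r.t. $\preceq$ is $m\colon2^N\to L([0,1])$, $m(\emptyset)=\mathbf0$, $m(N)=\mathbf1$, $m(A)\preceq m(B)$ for $A\subseteq B$. For a permutation $\sigma$, $E_{\sigma(i)}=\{\sigma(i),\dots,\sigma(n)\}$. $\mathbf S_m^{F,G}(X_1,\dots,X_n)=G\big(F(X_{\sigma(1)},m(E_{\sigma(1)})),\dots,F(X_{\sigma(n)},m(E_{\sigma(n)}))\big)$ with $\sigma$ any permutation such that $X_{\sigma(1)}\preceq\dots\preceq X_{\sigma(n)}$; it is defined when this value does not depend on the choice of $\sigma$ for all inputs. *)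

From mathcomp Require Import all_boot all_order all_algebra.
From mathcomp Require Import reals.
From mathcomp Require Import fingroup perm.

Set Implicit Arguments. Unset Strict Implicit. Unset Printing Implicit Defensive.
Import Order.TTheory GRing.Theory Num.Theory.
Local Open Scope ring_scope.

Section IVDefs.
Variable R : realType.

(* L([0,1]) = { [a,b] : 0 <= a <= b <= 1 }, an interval represented by (a,b) *)
Definition ivpred (p : R * R) : bool := [&& 0 <= p.1, p.1 <= p.2 & p.2 <= 1].
Definition IV := {p : R * R | ivpred p}.
Definition lo (x : IV) : R := (sval x).1.
Definition hi (x : IV) : R := (sval x).2.

Lemma iv0_proof : ivpred (0, 0).
Proof. by rewrite /ivpred /= lexx ler01. Qed.
Lemma iv1_proof : ivpred (1, 1).
Proof. by rewrite /ivpred /= lexx ler01. Qed.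

Definition iv0 : IV := exist _ (0, 0) iv0_proof.
Definition iv1 : IV := exist _ (1, 1) iv1_proof.

Definition admissible (le : rel IV) : Prop :=
  [/\ reflexive le, antisymmetric le, transitive le, total le &
      forall x y, lo x <= lo y -> hi x <= hi y -> le x y].

(* maximum / minimum w.r.t. le of a finite family (0 is bottom, 1 is top
   for any admissible order, so these are the max/min for n >= 1) *)
Definition ivmaxs (le : rel IV) (s : seq IV) : IV :=
  foldl (fun a b => if le a b then b else a) iv0 s.
Definition ivmins (le : rel IV) (s : seq IV) : IV :=
  foldl (fun a b => if le a b then a else b) iv1 s.

Definition vee (le : rel IV) n (X : 'I_n -> IV) : IV :=
  ivmaxs le [seq X i | i <- enum 'I_n].
Definition wedge (le : rel IV) n (X : 'I_n -> IV) : IV :=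
  ivmins le [seq X i | i <- enum 'I_n].

(* Proj_1 (first coordinate, index 0 in 0-based indexing) *)
Definition proj1 n (hn : (0 < n)%N) (X : 'I_n -> IV) : IV := X (Ordinal hn).

Definition fuzzy_measure (le : rel IV) n (m : {set 'I_n} -> IV) : Prop :=
  [/\ m set0 = iv0, m setT = iv1 &
      forall A B : {set 'I_n}, A \subset B -> le (m A) (m B)].

Definition sorting (le : rel IV) n (X : 'I_n -> IV) (s : {perm 'I_n}) : Prop :=
  forall i j : 'I_n, (i <= j)%N -> le (X (s i)) (X (s j)).

Definition Eset n (s : {perm 'I_n}) (i : 'I_n) : {set 'I_n} :=
  [set s j | j : 'I_n & (i <= j)%N].

Definition sugeno_val n (F : IV -> IV -> IV) (G : ('I_n -> IV) -> IV)
  (m : {set 'I_n} -> IV) (X : 'I_n -> IV) (s : {perm 'I_n}) : IV :=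
  G (fun i => F (X (s i)) (m (Eset s i))).

(* S_m^{F,G} is defined: the value does not depend on the sorting permutation *)
Definition sugeno_defined (le : rel IV) n (F : IV -> IV -> IV)
  (G : ('I_n -> IV) -> IV) (m : {set 'I_n} -> IV) : Prop :=
  forall X s1 s2, sorting le X s1 -> sorting le X s2 ->
    sugeno_val F G m X s1 = sugeno_val F G m X s2.

Definition nondecr2 (le : rel IV) (F : IV -> IV -> IV) : Prop :=
  forall X Y Z, le Y Z -> le (F X Y) (F X Z).

Definition sugeno_ge_min (le : rel IV) n F (G : ('I_n -> IV) -> IV) : Prop :=
  forall m, fuzzy_measure le m -> sugeno_defined le F G m ->
  forall X s, sorting le X s -> le (wedge le X) (sugeno_val F G m X s).
Definition sugeno_le_max (le : rel IV) n F (G : ('I_n -> IV) -> IV) : Prop :=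
  forall m, fuzzy_measure le m -> sugeno_defined le F G m ->
  forall X s, sorting le X s -> le (sugeno_val F G m X s) (vee le X).

End IVDefs.

From mathcomp Require Import all_boot all_order all_algebra.
From mathcomp Require Import reals.
From mathcomp Require Import fingroup perm.

Set Implicit Arguments. Unset Strict Implicit. Unset Printing Implicit Defensive.
Import Order.TTheory GRing.Theory Num.Theory.
Local Open Scope ring_scope.

(* Since E_{sigma(1)} = N, the first argument of G is F(X_{sigma(1)}, 1), and
   X_{sigma(1)} lies between the minimum and the maximum of the inputs; this
   settles every case where G is compared with its first argument (including
   G = f o vee >= Id o vee >= Proj_1).  When G is bounded by the maximum,
   monotonicity of F in the second variable and m <= 1 give
   F(X_{sigma(i)}, m(E_{sigma(i)})) <= F(X_{sigma(i)}, 1) <= X_{sigma(i)}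
   for every i, so every argument of G is below the maximum of the inputs. *)

Section FoldlExtremum.
Variables (T : eqType) (le : rel T).
Hypotheses (le_trans : transitive le) (le_total : total le).

Let le_refl : reflexive le.
Proof. by move=> a; have := le_total a a; rewrite orbb. Qed.

Let maxop a b := if le a b then b else a.
Let minop a b := if le a b then a else b.

Lemma le_foldl_max a l x : x \in a :: l -> le x (foldl maxop a l).
Proof.
elim: l a x => [|y l IH] a x; first by rewrite inE => /eqP ->.
have le_a : le a (maxop a y) by rewrite /maxop; case: ifP.
have le_y : le y (maxop a y).
  rewrite /maxop; case: ifP => // nay.
  by case/orP: (le_total a y); rewrite ?nay.
rewrite !inE => /or3P [/eqP -> | /eqP -> | xl] /=.
- exact: le_trans le_a (IH _ _ (mem_head _ _)).
- exact: le_trans le_y (IH _ _ (mem_head _ _)).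
- by apply: IH; rewrite inE xl orbT.
Qed.

Lemma foldl_max_le a l b :
  le a b -> (forall x, x \in l -> le x b) -> le (foldl maxop a l) b.
Proof.
elim: l a => [|y l IH] a //= le_ab le_lb.
apply: IH => [|x xl]; last by apply: le_lb; rewrite inE xl orbT.
by rewrite /maxop; case: ifP => _ //; apply: le_lb; rewrite mem_head.
Qed.

Lemma foldl_min_le a l x : x \in a :: l -> le (foldl minop a l) x.
Proof.
elim: l a x => [|y l IH] a x; first by rewrite inE => /eqP ->.
have le_a : le (minop a y) a.
  rewrite /minop; case: ifP => // nay.
  by case/orP: (le_total a y); rewrite ?nay.
have le_y : le (minop a y) y by rewrite /minop; case: ifP.
rewrite !inE => /or3P [/eqP -> | /eqP -> | xl] /=.
- exact: le_trans (IH _ _ (mem_head _ _)) le_a.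
- exact: le_trans (IH _ _ (mem_head _ _)) le_y.
- by apply: IH; rewrite inE xl orbT.
Qed.

End FoldlExtremum.

Section AdmissibleOrder.
Variables (R : realType) (le : rel (IV R)).
Hypothesis adm : admissible le.

Let trans_le : transitive le. Proof. by case: adm. Qed.
Let total_le : total le. Proof. by case: adm. Qed.

Lemma iv0_le x : le (iv0 R) x.
Proof.
case: adm => _ _ _ _ le_prod; apply: le_prod; rewrite /lo /hi /=.
  by case: x => -[a b] /= /and3P [].
by case: x => -[a b] /= /and3P [a_ge0 le_ab _]; apply: le_trans le_ab.
Qed.

Lemma wedge_le n (X : 'I_n -> IV R) i : le (wedge le X) (X i).
Proof. by apply: foldl_min_le => //; rewrite inE map_f ?mem_enum ?orbT. Qed.

Lemma le_vee n (X : 'I_n -> IV R) i : le (X i) (vee le X).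
Proof. by apply: le_foldl_max => //; rewrite inE map_f ?mem_enum ?orbT. Qed.

Lemma vee_le n (X : 'I_n -> IV R) b :
  (forall i, le (X i) b) -> le (vee le X) b.
Proof.
by move=> le_Xb; apply: foldl_max_le => [|x /mapP [i _ ->]]; rewrite ?iv0_le.
Qed.

Lemma fuzzy_measure_le1 n (m : {set 'I_n} -> IV R) A :
  fuzzy_measure le m -> le (m A) (iv1 R).
Proof. by case=> _ <- m_mono; apply/m_mono/subsetT. Qed.

Lemma Eset_first n (hn : (0 < n)%N) (s : {perm 'I_n}) :
  Eset s (Ordinal hn) = setT.
Proof.
apply/setP => x; rewrite inE; apply/imsetP.
by exists (s^-1 x)%g; rewrite ?inE ?permKV.
Qed.

Lemma sugeno_ge_min_of_first_arg n (hn : (0 < n)%N) F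
    (G : ('I_n -> IV R) -> IV R) :
  (forall X, le X (F X (iv1 R))) -> (forall Y, le (Y (Ordinal hn)) (G Y)) ->
  sugeno_ge_min le F G.
Proof.
move=> le_F le_G m [_ m1 _] _ X s _; rewrite /sugeno_val.
apply: trans_le (le_G _); rewrite /= Eset_first m1.
exact: trans_le (wedge_le _ _) (le_F _).
Qed.

Lemma sugeno_le_max_of_first_arg n (hn : (0 < n)%N) F
    (G : ('I_n -> IV R) -> IV R) :
  (forall X, le (F X (iv1 R)) X) -> (forall Y, le (G Y) (Y (Ordinal hn))) ->
  sugeno_le_max le F G.
Proof.
move=> le_F le_G m [_ m1 _] _ X s _; rewrite /sugeno_val.
apply: trans_le (le_G _) _; rewrite /= Eset_first m1.
exact: trans_le (le_F _) (le_vee _ _).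
Qed.

Lemma sugeno_le_max_of_le_vee n F (G : ('I_n -> IV R) -> IV R) :
  (forall X, le (F X (iv1 R)) X) -> nondecr2 le F ->
  (forall Y, le (G Y) (vee le Y)) -> sugeno_le_max le F G.
Proof.
move=> le_F F_mono le_G m m_fuzzy _ X s _; rewrite /sugeno_val.
apply: trans_le (le_G _) _; apply: vee_le => i.
apply: trans_le (F_mono _ _ _ (fuzzy_measure_le1 _ m_fuzzy)) _.
exact: trans_le (le_F _) (le_vee _ _).
Qed.

End AdmissibleOrder.

Theorem proposition4 (R : realType) (n : nat) (hn : (0 < n)%N)
  (le : rel (IV R)) (F : IV R -> IV R -> IV R) (G : ('I_n -> IV R) -> IV R) :
  admissible le ->
  [/\ (* (i) *)
      ((forall X, le X (F X (iv1 R))) /\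
         (exists f : IV R -> IV R, (forall X, le X (f X)) /\
            G = (fun X => f (proj1 hn X)))
       \/ (forall X, le X (F X (iv1 R))) /\ nondecr2 le F /\
         (exists f : IV R -> IV R, (forall X, le X (f X)) /\
            G = (fun X => f (vee le X)))) ->
      sugeno_ge_min le F G,
      (* (ii) *)
      ((forall X, le (F X (iv1 R)) X) /\
         (exists f : IV R -> IV R, (forall X, le (f X) X) /\
            G = (fun X => f (proj1 hn X)))
       \/ (forall X, le (F X (iv1 R)) X) /\ nondecr2 le F /\
         (exists f : IV R -> IV R, (forall X, le (f X) X) /\
            G = (fun X => f (vee le X)))) ->
      sugeno_le_max le F G
    & (* (iii) *)
      ((forall X, F X (iv1 R) = X) /\ G = proj1 hn
       \/ (forall X, F X (iv1 R) = X) /\ nondecr2 le F /\ G = @vee R le n) ->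
      sugeno_ge_min le F G /\ sugeno_le_max le F G].
Proof.
move=> adm; have [le_refl _ trans_le _ _] := adm.
have ge_min_first := @sugeno_ge_min_of_first_arg _ _ adm _ hn.
have le_max_first := @sugeno_le_max_of_first_arg _ _ adm _ hn.
have le_max_vee := sugeno_le_max_of_le_vee adm.
split.
- case=> [[le_F [f [le_f ->]]] | [le_F [_ [f [le_f ->]]]]];
    apply: ge_min_first => // Y.
  exact: trans_le (le_vee adm _ _) (le_f _).
- by case=> [[le_F [f [le_f ->]]] | [le_F [F_mono [f [le_f ->]]]]];
    [apply: le_max_first | apply: le_max_vee].
- case=> [[F1 ->] | [F1 [F_mono ->]]]; split.
  + by apply: ge_min_first => [X|Y]; rewrite ?F1.
  + by apply: le_max_first => [X|Y]; rewrite ?F1.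
  + by apply: ge_min_first => [X|Y]; rewrite ?F1 ?le_vee.
  + by apply: le_max_vee => [X||Y]; rewrite ?F1.
Qed.
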